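(* Let $S$ be as in the context, $1\le k<n$, and let $\zeta\in\mathcal{T}_k(S)$ be a node that has exactly one child $\phi$. (1) If $\zeta$ has a unique Weiner link, then $w_{k+1}(\phi)=1$. (2) If $\zeta$ has multiple Weiner links, then $w_{k+1}(\phi)=w_k(\zeta)$.
   Context: $\Sigma$ is a finite totally ordered alphabet containing a symbol $\$$ smaller than every other symbol. $S$ is a string of length $n\ge 2$ over $\Sigma$ whose last character is $\$$ and in which $\$$ occurs nowhere else. The rotations of $S$ are the $n$ strings $S[i..n]S[1..i-1]$, $i\in[1,n]$. The rotation-trie $\mathcal{T}(S)$ is the trie of the set of rotations of $S$ (a rooted tree with single-character edge labels, children of a node having distinct labels, ordered by increasing label). The label $l(\phi)$ of a node is the concatenation of edge labels on the root-to-$\phi$ path, its level is $|l(\phi)|$, leaves are the nodes at level $n$, $|\phi|$ is the number of leaves in the subtree rooted at $\phi$, and $\mathcal{T}_k(S)$ is the set of nodes at level $k$. Siblings are distinct nodes with the same parent. A triple $(\phi,\varphi,c)$ is a Weiner link of $\phi$ if $l(\varphi)=c\,l(\phi)$, or $|l(\phi)|=n$ and $l(\varphi)=c\,l(\phi)[1..n-1]$. $\phi$ has a unique Weiner link if all its Weiner links have the same target node, and multiple Weiner links otherwise. For $\phi\in\mathcal{T}_k(S)$ define $w_k(\phi)=1$ if $\phi$ has a unique Weiner link $(\phi,\varphi,c)$ and $\varphi$ has no siblings, and $w_k(\phi)=|\phi|$ otherwise. *)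

From HB Require Import structures.
From mathcomp Require Import all_boot all_order.
From Stdlib Require Import ClassicalEpsilon.
Set Implicit Arguments. Unset Strict Implicit. Unset Printing Implicit Defensive.
Import Order.TTheory.
Local Open Scope order_scope.

Section RotTrie.
Variables (d : Order.disp_t) (T : finOrderType d).

Definition valid_string (dollar : T) (S : seq T) : Prop :=
  [/\ (2 <= size S)%N, last dollar S = dollar, count_mem dollar S = 1%N
    & forall c : T, c != dollar -> dollar < c].

(* The n rotations S[i..n]S[1..i-1], i in [1,n]  (= rot (i-1) S). *)
Definition rotations (S : seq T) : seq (seq T) :=
  [seq rot i S | i <- iota 0 (size S)].

(* Nodes of the rotation trie are identified with their labels:
   the prefixes of rotations.  The level of a node u is size u. *)
Definition is_node (S : seq T) (u : seq T) : bool :=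
  has (prefix u) (rotations S).

(* |u| : number of leaves (distinct rotations) in the subtree of u. *)
Definition nleaves (S : seq T) (u : seq T) : nat :=
  count (prefix u) (undup (rotations S)).

Definition is_child (S : seq T) (u v : seq T) : bool :=
  [&& is_node S u, is_node S v, size v == (size u).+1 & prefix u v].

Definition has_sibling (S : seq T) (v : seq T) : Prop :=
  exists v', [/\ is_node S v', v' != v, (0 < size v)%N, size v' = size v
               & take (size v).-1 v' = take (size v).-1 v].

Definition weiner_link (S : seq T) (u v : seq T) (c : T) : bool :=
  is_node S u && is_node S v &&
  ((v == c :: u) || ((size u == size S) && (v == c :: take (size S).-1 u))).

Definition unique_wl (S : seq T) (u : seq T) : Prop :=
  forall v1 c1 v2 c2, weiner_link S u v1 c1 -> weiner_link S u v2 c2 -> v1 = v2.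

Definition w_one_cond (S : seq T) (u : seq T) : Prop :=
  unique_wl S u /\ exists v c, weiner_link S u v c /\ ~ has_sibling S v.

(* w_k(u) for a node u at level k (k is size u) *)
Definition w (S : seq T) (u : seq T) : nat :=
  if excluded_middle_informative (w_one_cond S u) then 1%N else nleaves S u.

End RotTrie.

From HB Require Import structures.
From mathcomp Require Import all_boot all_order.
From Stdlib Require Import ClassicalEpsilon.
Import Order.TTheory.
Set Implicit Arguments. Unset Strict Implicit.

(* Since [zeta] has the single child [phi = rcons zeta a], every rotation
   through [zeta] continues with [a]: [phi] and [zeta] carry the same leaves,
   and [c :: zeta] is a node exactly when the Weiner-link target of [phi] by
   [c] is one (it is [c :: phi], or [c :: zeta] itself when [phi] is a leaf).
   So [phi] and [zeta] have the same Weiner-link letters, hence a unique Weiner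
   link simultaneously.  Moreover every link target of [phi] is sibling-free:
   an extension of [c :: zeta] yields, after erasing [c], a child of [zeta];
   and at the leaf level a rotation is determined by its first n-1 letters. *)

Section RotationTrie.
Variables (d : Order.disp_t) (T : finOrderType d) (S : seq T).
Local Notation n := (size S).

Lemma size_rotations r : r \in rotations S -> size r = n.
Proof. by case/mapP=> i _ ->; rewrite size_rot. Qed.

Lemma perm_rotations r : r \in rotations S -> perm_eq r S.
Proof. by case/mapP=> i _ ->; rewrite perm_rot. Qed.

Lemma rotations_rot1 r : r \in rotations S -> rot 1 r \in rotations S.
Proof.
case/mapP=> i; rewrite mem_iota add0n => /andP[_ lt_i_n] ->.
apply/mapP; case: (ltnP i.+1 n) => Hi.
  by exists i.+1; [rewrite mem_iota | rewrite -rotD ?add1n].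
exists 0%N; first by rewrite mem_iota (leq_ltn_trans (leq0n i)).
by rewrite -rotD ?add1n // rot_oversize // rot0.
Qed.

Lemma rotations_rot m r : r \in rotations S -> rot m r \in rotations S.
Proof.
move=> Hr; elim: m => [|m IH]; first by rewrite rot0.
have [ltmr | lerm] := ltnP m (size r); last by rewrite rot_oversize // leqW.
by rewrite -add1n rotD // rotations_rot1.
Qed.

Lemma is_nodeP u :
  reflect (exists2 r, r \in rotations S & prefix u r) (is_node S u).
Proof. exact: hasP. Qed.

Lemma node_rotations r : r \in rotations S -> is_node S r.
Proof. by move=> Hr; apply/is_nodeP; exists r; rewrite ?prefix_refl. Qed.

Lemma size_node u : is_node S u -> (size u <= n)%N.
Proof. by case/is_nodeP=> r Hr Hur; rewrite -(size_rotations Hr) size_prefix. Qed.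

Lemma node_prefix u v : prefix u v -> is_node S v -> is_node S u.
Proof.
by move=> Huv /is_nodeP[r Hr Hvr]; apply/is_nodeP; exists r; last exact: prefix_trans Hvr.
Qed.

Lemma node_full u : is_node S u -> size u = n -> u \in rotations S.
Proof.
case/is_nodeP=> r Hr; rewrite prefixE => /eqP Hur Hu.
by rewrite -Hur Hu -(size_rotations Hr) take_size.
Qed.

Lemma node_rcons u : is_node S u -> (size u < n)%N -> exists x, is_node S (rcons u x).
Proof.
case/is_nodeP=> r Hr /prefixP[[|x s] Er] Hlt.
  by move: Hlt; rewrite -(size_rotations Hr) Er cats0 ltnn.
by exists x; apply/is_nodeP; exists r => //; apply/prefixP; exists s; rewrite Er cat_rcons.
Qed.

(* Deleting the first letter of a rotation and appending it at the end gives
   another rotation, so the node set is closed under [behead]. *)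
Lemma node_behead c u : is_node S (c :: u) -> is_node S u.
Proof.
case/is_nodeP=> [[|y r] // Hr /andP[_ Hur]].
apply/is_nodeP; exists (rcons r y); first by rewrite -rot1_cons rotations_rot1.
exact: prefix_trans Hur (prefix_rcons _ _).
Qed.

Lemma node_cons u : is_node S u -> (size u < n)%N -> exists c, is_node S (c :: u).
Proof.
case/is_nodeP=> r Hr Hur Hlt; have Hsr := size_rotations Hr.
case/lastP: r Hr Hur Hsr => [|r z] Hr Hur Hsr; first by rewrite -Hsr in Hlt.
exists z; apply/is_nodeP; exists (z :: r).
  by rewrite -rotr1_rcons rotations_rot.
move: Hur; rewrite /= eqxx /= !prefixE -cats1 takel_cat //.
by rewrite -ltnS -[(size r).+1](size_rcons r z) Hsr.
Qed.

Lemma sibling_free_rcons p x :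
  (forall y, is_node S (rcons p y) -> y = x) -> ~ has_sibling S (rcons p x).
Proof.
move=> Hp [v' [Hv' /eqP Hne _ Hsv' Hpre]]; apply: Hne.
case/lastP: v' Hv' Hsv' Hpre => [|p' y]; first by rewrite size_rcons.
rewrite !size_rcons /= => Hv' -[Hsp]; rewrite -{1}Hsp -!cats1 !take_size_cat // => Ep.
by rewrite Ep in Hv' *; rewrite (Hp y).
Qed.

(* Two rotations sharing all letters but the last are equal, as both are
   permutations of [S]. *)
Lemma full_node_sibling_free v : is_node S v -> size v = n -> ~ has_sibling S v.
Proof.
case/lastP: v => [_ _ [v' [_ _ //]] | p x Hv Hsv].
apply: sibling_free_rcons => y Hy.
have Ry : rcons p y \in rotations S by rewrite node_full // size_rcons -Hsv size_rcons.
have : perm_eq (rcons p y) (rcons p x).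
  by rewrite (perm_trans (perm_rotations Ry)) // perm_sym perm_rotations // node_full.
by rewrite -!cats1 perm_cat2l => /(@perm_small_eq _ _ [:: x] isT) [].
Qed.

Lemma take_pred_size (u : seq T) : (size u < n)%N -> take n.-1 u = u.
Proof. by move=> Hlt; rewrite take_oversize // -ltnS (ltn_predK Hlt). Qed.

Lemma child_rcons u v : is_child S u v -> exists x, v = rcons u x.
Proof.
case/and4P=> _ _ /eqP Hsv /prefixP[s Ev].
move: Hsv; rewrite Ev size_cat -addn1 => /eqP; rewrite eqn_add2l.
by case: s Ev => [|x [|y s]] // Ev _; exists x; rewrite cats1.
Qed.

Definition wl_target (u : seq T) (c : T) : seq T := c :: take n.-1 u.

Lemma weiner_linkE u v c :
  weiner_link S u v c = [&& is_node S u, is_node S (wl_target u c) & v == wl_target u c].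
Proof.
rewrite /weiner_link /wl_target.
have [Hu /= | //] := boolP (is_node S u).
have [Hn | Hne] := eqVneq (size u) n.
  have [-> | _] := eqVneq v (c :: take n.-1 u).
    by rewrite orbT andbT.
  by rewrite orbF andbF; apply/andP => -[/[swap]/eqP-> /size_node]; rewrite /= Hn ltnn.
have Hlt : (size u < n)%N by rewrite ltn_neqAle Hne size_node.
rewrite orbF take_pred_size //.
by have [-> | _] := eqVneq v (c :: u); rewrite ?andbT ?andbF.
Qed.

Lemma unique_wlP u : is_node S u ->
  unique_wl S u <->
  (forall c1 c2, is_node S (wl_target u c1) -> is_node S (wl_target u c2) -> c1 = c2).
Proof.
move=> Hu; split=> [U c1 c2 N1 N2 | U v1 c1 v2 c2].
  have := U (wl_target u c1) c1 (wl_target u c2) c2.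
  by rewrite !weiner_linkE Hu N1 N2 !eqxx => /(_ isT isT) [].
by rewrite !weiner_linkE => /and3P[_ N1 /eqP->] /and3P[_ N2 /eqP->]; rewrite (U _ _ N1 N2).
Qed.

Lemma wl_target_exists u : is_node S u -> exists c, is_node S (wl_target u c).
Proof.
move=> Hu; have n_gt0 : (0 < n)%N.
  case/is_nodeP: Hu => r /mapP[i]; rewrite mem_iota add0n.
  by move=> /andP[_ /(leq_ltn_trans (leq0n i))].
apply: node_cons; first exact: node_prefix (prefix_take _ _) Hu.
by rewrite size_take_min (leq_ltn_trans (geq_minl _ _)) // ltn_predL.
Qed.

Lemma w_multiple u : ~ unique_wl S u -> w S u = nleaves S u.
Proof. by rewrite /w; case: excluded_middle_informative => // -[]. Qed.

End RotationTrie.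

Section OnlyChild.
Variables (d : Order.disp_t) (T : finOrderType d) (S zeta : seq T) (a : T).
Local Notation n := (size S).
Local Notation phi := (rcons zeta a).
Hypotheses (zeta_lt : (size zeta < n)%N) (phi_node : is_node S phi).
Hypothesis only_child : forall v, is_child S zeta v -> v = phi.

Let zeta_node : is_node S zeta.
Proof. exact: node_prefix (prefix_rcons _ _) phi_node. Qed.

Lemma only_child_rcons y : is_node S (rcons zeta y) -> y = a.
Proof.
move=> Hy; suff /rcons_inj[] : rcons zeta y = phi by [].
by apply: only_child; rewrite /is_child zeta_node Hy size_rcons eqxx prefix_rcons.
Qed.

Lemma only_child_prefix v :
  is_node S v -> prefix zeta v -> (size zeta < size v)%N -> prefix phi v.
Proof.
move=> Hv /prefixP[[|y s] Ev]; first by rewrite Ev cats0 ltnn.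
have Hy : is_node S (rcons zeta y).
  by apply: node_prefix Hv; apply/prefixP; exists s; rewrite Ev cat_rcons.
by move=> _; apply/prefixP; exists s; rewrite Ev -(only_child_rcons Hy) cat_rcons.
Qed.

Lemma nleaves_only_child : nleaves S phi = nleaves S zeta.
Proof.
apply: eq_in_count => r; rewrite mem_undup => Hr.
apply/idP/idP => [|Hzr]; first exact/prefix_trans/prefix_rcons.
by apply: only_child_prefix; rewrite ?node_rotations ?(size_rotations Hr).
Qed.

Lemma node_wl_target_only_child c :
  is_node S (wl_target S phi c) = is_node S (c :: zeta).
Proof.
have [Hfull | Hlt] := eqVneq (size phi) n.
  by rewrite /wl_target -Hfull size_rcons /= -cats1 take_size_cat.
have {}Hlt : (size phi < n)%N by rewrite ltn_neqAle Hlt size_node.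
rewrite /wl_target take_pred_size //; apply/idP/idP.
  by apply: node_prefix; rewrite /= eqxx prefix_rcons.
move=> Hc; have [x Hx] : exists x, is_node S (rcons (c :: zeta) x).
  by apply: node_rcons; rewrite //= -(size_rcons zeta a).
by rewrite -rcons_cons -(only_child_rcons (node_behead Hx)).
Qed.

Lemma unique_wl_only_child : unique_wl S phi <-> unique_wl S zeta.
Proof.
rewrite (unique_wlP phi_node) (unique_wlP zeta_node) /wl_target.
rewrite (take_pred_size zeta_lt) -!/(wl_target S phi _).
by split=> U c1 c2; move: (U c1 c2); rewrite !node_wl_target_only_child.
Qed.

Lemma wl_target_only_child_sibling_free c :
  is_node S (wl_target S phi c) -> ~ has_sibling S (wl_target S phi c).
Proof.
have [Hfull | Hlt] := eqVneq (size phi) n.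
  by move=> Hc; apply: full_node_sibling_free; rewrite //= size_take -Hfull size_rcons ltnSn.
have {}Hlt : (size phi < n)%N by rewrite ltn_neqAle Hlt size_node.
rewrite /wl_target take_pred_size // -rcons_cons => _.
by apply: sibling_free_rcons => y; rewrite rcons_cons => /node_behead/only_child_rcons.
Qed.

Lemma w_only_child_unique : unique_wl S zeta -> w S phi = 1%N.
Proof.
move=> U; rewrite /w; case: excluded_middle_informative => // -[].
split; first exact/unique_wl_only_child.
have [c Hc] := wl_target_exists phi_node.
exists (wl_target S phi c), c; split; last exact: wl_target_only_child_sibling_free.
by rewrite weiner_linkE phi_node Hc eqxx.
Qed.

Lemma w_only_child_multiple : ~ unique_wl S zeta -> w S phi = w S zeta.
Proof.
move=> nU; rewrite !w_multiple ?nleaves_only_child //.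
by rewrite unique_wl_only_child.
Qed.

End OnlyChild.

Theorem mainTheorem5 (d : Order.disp_t) (T : finOrderType d) (dollar : T)
  (S : seq T) (k : nat) (zeta phi : seq T) :
  valid_string dollar S ->
  (1 <= k < size S)%N ->
  is_node S zeta -> size zeta = k ->
  is_child S zeta phi ->
  (forall v, is_child S zeta v -> v = phi) ->
  (unique_wl S zeta -> w S phi = 1%N) /\
  (~ unique_wl S zeta -> w S phi = w S zeta).
Proof.
move=> _ /andP[_ Hk] _ Hsz Hchild Honly; rewrite -Hsz in Hk.
have [a Ea] := child_rcons Hchild; subst phi.
have Hphi : is_node S (rcons zeta a) by case/and4P: Hchild.
split; [exact: w_only_child_unique | exact: w_only_child_multiple].
Qed.
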